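(* Consider an agent-dependent SDP performance estimation problem (PEP) for distributed optimization with $n$ agents, and let $(F,G)$, $F=[f_1^T\dots f_n^T]\in\mathbb{R}^{nq}$, $G=[G_{ij}]_{i,j=1}^n\in\mathbb{R}^{np\times np}$, be any feasible solution. Let $\{\mathcal{V}_1,\dots,\mathcal{V}_U\}$ be the partition of the agent set $\mathcal{V}=\{1,\dots,n\}$ into equivalence classes of agents, with $n_u=|\mathcal{V}_u|$ and $u_i$ the index of the class containing agent $i$. Define $F^s=[(f_1^s)^T\dots(f_n^s)^T]$ and $G^s=[G^s_{ij}]$ by $$f_i^s=\frac{1}{n_{u_i}}\sum_{k\in\mathcal{V}_{u_i}}f_k,\qquad G^s_{ij}=\begin{cases}\frac{1}{n_{u_i}}\sum_{k\in\mathcal{V}_{u_i}}G_{kk}, & i=j,\\[1mm] \frac{1}{n_{u_i}(n_{u_i}-1)}\sum_{k\in\mathcal{V}_{u_i}}\sum_{l\in\mathcal{V}_{u_i},\,l\ne k}G_{kl}, & j\ne i,\ j\in\mathcal{V}_{u_i},\\[1mm] \frac{1}{n_{u_i}n_{u_j}}\sum_{k\in\mathcal{V}_{u_i}}\sum_{l\in\mathcal{V}_{u_j}}G_{kl}, & j\notin\mathcal{V}_{u_i}.\end{cases}$$ Then $(F^s,G^s)$ is a feasible solution of the PEP and $\mathcal{P}(F^s,G^s)=\mathcal{P}(F,G)$.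
   Context: Distributed optimization: $n$ agents with local functions $f_i:\mathbb{R}^d\to\mathbb{R}$ aim to minimize $f(x)=\frac1n\sum_i f_i(x)$ via an algorithm built from local gradient evaluations, consensus steps $y_i=\sum_j w_{ij}x_j$ with averaging matrices from a given class, and linear combinations of each agent's local variables. In the agent-dependent SDP PEP, each agent $i$ holds $p$ vector variables (its iterates, consensus outputs, gradients, and copies of points common to all agents such as the minimizer $x^*$), gathered as the columns of $P_i\in\mathbb{R}^{d\times p}$ in the same order for all agents, and $q$ function values gathered in $f_i\in\mathbb{R}^q$. The variables are $F=[f_1^T\dots f_n^T]$ and the Gram matrix $G=P^TP\succeq0$ with $P=[P_1\dots P_n]$, so $G_{ij}=P_i^TP_j$; the objective $\mathcal{P}(F,G)$ (performance criterion) and all constraints (algorithm constraints, function-class interpolation constraints, initial conditions, optimality condition $\frac1n\sum_i\nabla f_i(x^* )=0$, consensus constraints) are linear constraints or linear matrix inequalities in $(F,G)$, together with $G\succeq0$. Two agents $i,j$ are equivalent if, for every feasible $(F,G)$, the solution obtained by permuting the blocks of agents $i$ and $j$ (in $F$ and in the block rows and columns of $G$) is again feasible and has the same objective value; this is an equivalence relation whose classes partition $\mathcal{V}$. *)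

From HB Require Import structures.
From mathcomp Require Import all_boot all_order all_algebra all_fingroup.
Set Implicit Arguments. Unset Strict Implicit. Unset Printing Implicit Defensive.
Import Order.TTheory GRing.Theory Num.Theory.
Local Open Scope ring_scope.

Section PEP.
Variables (R : realFieldType) (n p q : nat).

(* Variables of the PEP:
   F i t   = t-th function value of agent i          (F = [f_1^T ... f_n^T])
   G i a j b = entry (a,b) of the block G_ij = P_i^T P_j. *)
Definition Fvar := 'I_n -> 'I_q -> R.
Definition Gvar := 'I_n -> 'I_p -> 'I_n -> 'I_p -> R.

Record aform := AForm {
  af0 : R;
  afF : 'I_n -> 'I_q -> R;
  afG : 'I_n -> 'I_p -> 'I_n -> 'I_p -> R }.

Definition aeval (e : aform) (F : Fvar) (G : Gvar) : R :=
  af0 e + \sum_i \sum_t afF e i t * F i t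
        + \sum_i \sum_a \sum_j \sum_b afG e i a j b * G i a j b.

Definition psdmx (m : nat) (M : 'M[R]_m) : Prop :=
  M^T = M /\ forall x : 'rV[R]_m, 0 <= (x *m M *m x^T) 0 0.

Definition psdG (G : Gvar) : Prop :=
  (forall i a j b, G i a j b = G j b i a) /\
  forall x : 'I_n -> 'I_p -> R,
    0 <= \sum_i \sum_a \sum_j \sum_b x i a * G i a j b * x j b.

(* A PEP: linear equalities, linear inequalities, LMIs (matrix-valued affine
   functions of (F,G) required to be PSD), and a performance criterion. *)
Unset Implicit Arguments.
Record pep := Pep {
  neq : nat; eqc : 'I_neq -> aform;
  nin : nat; inc : 'I_nin -> aform;
  nlmi : nat; lmidim : 'I_nlmi -> nat;
  lmic : forall l : 'I_nlmi, 'I_(lmidim l) -> 'I_(lmidim l) -> aform;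
  perf : aform }.
Set Implicit Arguments.

Definition feasible (P : pep) (F : Fvar) (G : Gvar) : Prop :=
  psdG G /\
  (forall k, aeval (eqc P k) F G = 0) /\
  (forall k, 0 <= aeval (inc P k) F G) /\
  (forall l, psdmx (\matrix_(r, s) aeval (lmic P l r s) F G)).

Definition objective (P : pep) (F : Fvar) (G : Gvar) : R := aeval (perf P) F G.

Definition swapF (i j : 'I_n) (F : Fvar) : Fvar :=
  fun k t => F (tperm i j k) t.
Definition swapG (i j : 'I_n) (G : Gvar) : Gvar :=
  fun k a l b => G (tperm i j k) a (tperm i j l) b.

Definition agents_equiv (P : pep) (i j : 'I_n) : Prop :=
  forall F G, feasible P F G ->
    feasible P (swapF i j F) (swapG i j G) /\
    objective P (swapF i j F) (swapG i j G) = objective P F G.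

Definition csize (U : nat) (c : 'I_n -> 'I_U) (u : 'I_U) : nat :=
  #|[set k | c k == u]|.

Definition symF (U : nat) (c : 'I_n -> 'I_U) (F : Fvar) : Fvar :=
  fun i t => ((csize c (c i))%:R)^-1 * \sum_(k | c k == c i) F k t.

Definition symG (U : nat) (c : 'I_n -> 'I_U) (G : Gvar) : Gvar :=
  fun i a j b =>
    if i == j then
      ((csize c (c i))%:R)^-1 * \sum_(k | c k == c i) G k a k b
    else if c j == c i then
      ((csize c (c i) * (csize c (c i)).-1)%:R)^-1 *
        \sum_(k | c k == c i) \sum_(l | (c l == c i) && (l != k)) G k a l b
    else
      ((csize c (c i) * csize c (c j))%:R)^-1 *
        \sum_(k | c k == c i) \sum_(l | c l == c j) G k a l b.

End PEP.

(* The symmetrized solution is the average of the relabelled solutions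
   (F o s, G o (s x s)) over the group H of permutations of the agents that
   preserve every equivalence class: averaging over a group is averaging over
   each orbit, and each block of (F^s, G^s) is the mean of the corresponding
   blocks of (F, G) over an H-orbit -- of agents on the diagonal, of ordered
   pairs of distinct agents off it.  H is generated by transpositions of
   equivalent agents, so every relabelled solution is feasible with the same
   objective value.  The constraints are affine equalities, affine
   inequalities and LMIs, so the feasible set is convex and the objective is
   affine: the average is feasible with the same value. *)

From HB Require Import structures.
From mathcomp Require Import all_boot all_order all_algebra all_fingroup.
From Stdlib Require Import FunctionalExtensionality.
Set Implicit Arguments.
Unset Strict Implicit.
Unset Printing Implicit Defensive.

Import Order.TTheory GRing.Theory Num.Theory.
Local Open Scope ring_scope.

Section Mean.
Variables (R : numFieldType) (I : finType) (A : {pred I}).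

Definition mean (x : I -> R) : R := #|A|%:R^-1 * \sum_(i in A) x i.

Lemma eq_mean (x y : I -> R) : {in A, x =1 y} -> mean x = mean y.
Proof. by move=> exy; rewrite /mean (eq_bigr y). Qed.

Lemma meanD (x y : I -> R) : mean (fun i => x i + y i) = mean x + mean y.
Proof. by rewrite /mean big_split mulrDr. Qed.

Lemma mean_sum (J : finType) (X : I -> J -> R) :
  mean (fun i => \sum_j X i j) = \sum_j mean (X ^~ j).
Proof. by rewrite /mean exchange_big mulr_sumr. Qed.

Lemma meanZ (k : R) (x : I -> R) : mean (fun i => k * x i) = k * mean x.
Proof. by rewrite /mean -mulr_sumr mulrCA. Qed.

Lemma sum_mul_mean (J : finType) (w : J -> R) (X : I -> J -> R) :
  \sum_j w j * mean (X ^~ j) = mean (fun i => \sum_j w j * X i j).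
Proof. by rewrite mean_sum; apply: eq_bigr => j _; rewrite meanZ. Qed.

Lemma mean_cst (k : R) : (0 < #|A|)%N -> mean (fun _ => k) = k.
Proof.
by move=> A_gt0; rewrite /mean sumr_const -[k *+ _]mulr_natl mulKf // pnatr_eq0 -lt0n.
Qed.

Lemma mean_ge0 (x : I -> R) : {in A, forall i, 0 <= x i} -> 0 <= mean x.
Proof. by move=> x_ge0; rewrite mulr_ge0 ?invr_ge0 ?ler0n ?sumr_ge0. Qed.

End Mean.

Lemma mean_orbit (R : numFieldType) (gT : finGroupType) (T : finType)
    (to : {action gT &-> T}) (A : {group gT}) (x : T) (f : T -> R) :
  mean A (fun a => f (to x a)) = mean (orbit to A x) f.
Proof.
set C := 'C_A[x | to]%g.
(* Each fibre of [a |-> to x a] over the orbit is a coset of the stabiliser C. *)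
have fibre_card y : y \in orbit to A x ->
    \sum_(a in A | to x a == y) f (to x a) = #|C|%:R * f y.
  case/orbitP=> b Ab <-; rewrite (eq_bigr (fun _ => f (to x b))); last first.
    by move=> a /andP[_ /eqP ->].
  rewrite sumr_const mulr_natl; congr (_ *+ _).
  by rewrite -(card_rcoset C b) -amove_act ?subsetT //; apply: eq_card => a; rewrite inE.
rewrite /mean (partition_big (fun a => to x a) (mem (orbit to A x))) /=; last first.
  by move=> a; apply: mem_orbit.
rewrite (eq_bigr _ fibre_card) -mulr_sumr -(card_orbit_stab to A x) natrM.
have C_neq0 : #|C|%:R != 0 :> R by rewrite pnatr_eq0 -lt0n; apply/card_gt0P; exists 1%g.
by rewrite invfM mulrAC -mulrA (mulrC #|C|%:R) mulfK.
Qed.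

Section ClassPreservingPermutations.
Variables (T : finType) (X : eqType) (c : T -> X).

Definition class_perm : {set {perm T}} := [set s : {perm T} | [forall x, c (s x) == c x]].

Lemma class_permP (s : {perm T}) :
  reflect (forall x, c (s x) = c x) (s \in class_perm).
Proof. by rewrite inE; apply: (iffP forallP) => cs x; apply/eqP. Qed.

Lemma group_set_class_perm : group_set class_perm.
Proof.
apply/group_setP; split; first by apply/class_permP => x; rewrite perm1.
by move=> s t /class_permP cs /class_permP ct; apply/class_permP => x; rewrite permM ct cs.
Qed.

Canonical class_perm_group := group group_set_class_perm.

Lemma tperm_class_perm x y : c x = c y -> tperm x y \in class_perm.
Proof. by move=> cxy; apply/class_permP => z; case: tpermP => [->|->|//]; rewrite cxy. Qed.

Lemma class_perm_ind (Pr : {perm T} -> Prop) :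
    Pr 1%g -> (forall s x y, c x = c y -> Pr s -> Pr (s * tperm x y)%g) ->
  {in class_perm, forall s, Pr s}.
Proof.
move=> Pr1 PrM s; have [m] := ubnP #|[pred x | s x != x]|.
elim: m s => // m IHm s /ltnSE le_s_m /class_permP cs.
case: (pickP (fun x => s x != x)) => [x sx | s_id]; last first.
  suff -> : s = 1%g by [].
  by apply/permP => x; rewrite perm1; apply/eqP/negbFE/s_id.
(* s * t fixes x and moves no point fixed by s. *)
pose t := tperm x (s x).
have -> : s = (s * t * t)%g by rewrite -mulgA tperm2 mulg1.
apply: PrM; first by rewrite cs.
apply: IHm; last first.
  by rewrite groupM ?tperm_class_perm ?cs //; apply/class_permP.
rewrite (cardD1 x) !inE sx in le_s_m; apply: leq_ltn_trans le_s_m.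
apply: subset_leq_card; apply/subsetP => y; rewrite !inE permM.
have [-> | nyx] := eqVneq y x; first by rewrite tpermR eqxx.
apply: contraNneq => syy; rewrite syy tpermD // eq_sym //.
by rewrite -{1}syy (inj_eq perm_inj).
Qed.

Lemma orbit_class_perm x : orbit 'P class_perm x = [set y | c y == c x].
Proof.
apply/setP => y; rewrite [in RHS]inE.
apply/orbitP/eqP => [[s /class_permP cs <-] | cyx]; first exact: cs.
by exists (tperm x y); [apply: tperm_class_perm | apply: tpermL].
Qed.

Definition aperm2 (xy : T * T) (s : {perm T}) := (s xy.1, s xy.2).

Lemma aperm2_1 : aperm2^~ 1%g =1 id.
Proof. by case=> x y; rewrite /aperm2 !perm1. Qed.

Lemma aperm2_act_morph xy : act_morph aperm2 xy.
Proof. by move=> s t; rewrite /aperm2 !permM. Qed.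

Canonical pair_perm_action := TotalAction aperm2_1 aperm2_act_morph.

Lemma aperm2E xy s : pair_perm_action xy s = (s xy.1, s xy.2).
Proof. by []. Qed.

Lemma orbit_pair_class_perm x y : x != y ->
  orbit pair_perm_action class_perm (x, y) =
  [set kl | [&& c kl.1 == c x, c kl.2 == c y & kl.2 != kl.1]].
Proof.
move=> nxy; apply/setP => -[k l]; rewrite inE /=.
apply/orbitP/and3P => [[s /class_permP cs [<- <-]] | [/eqP ckx /eqP cly nlk]].
  by rewrite !cs !eqxx (inj_eq perm_inj) eq_sym.
pose t := tperm x k; pose m := t y.
have t_class : t \in class_perm by apply: tperm_class_perm.
have cml : c m = c l by rewrite cly; apply/class_permP.
exists (t * tperm m l)%g; first by rewrite groupM ?tperm_class_perm.
have nmk : m != k by rewrite -(tpermL x k) (inj_eq perm_inj) eq_sym.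
by rewrite aperm2E /= !permM tpermL tpermD // tpermL.
Qed.

End ClassPreservingPermutations.

Section ClassCounting.
Variables (n U : nat) (c : 'I_n -> 'I_U).

Lemma mean_class (R : numFieldType) u (f : 'I_n -> R) :
  mean [set k | c k == u] f = (csize c u)%:R^-1 * \sum_(k | c k == u) f k.
Proof. by rewrite /mean; congr (_ * _); apply: eq_bigl => k; rewrite inE. Qed.

Lemma card_class_partners k v :
  #|[set l | (c l == v) && (l != k)]| = (csize c v - (c k == v))%N.
Proof.
rewrite /csize (cardD1 k [set l | c l == v]) inE addKn.
by apply: eq_card => l; rewrite !inE andbC.
Qed.

Lemma card_class_pairs u v :
  #|[set kl | [&& c kl.1 == u, c kl.2 == v & kl.2 != kl.1]]| =
  (csize c u * (csize c v - (u == v)))%N.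
Proof.
rewrite -sum1dep_card.
transitivity (\sum_(k | c k == u) \sum_(l | (c l == v) && (l != k)) 1)%N.
  by rewrite pair_big_dep.
rewrite (eq_bigr (fun _ => csize c v - (u == v)))%N => [|k /eqP cku].
  by rewrite sum_nat_cond_const.
by rewrite sum1dep_card card_class_partners cku.
Qed.

Lemma mean_class_pairs (R : numFieldType) u v (f : 'I_n -> 'I_n -> R) :
  mean [set kl | [&& c kl.1 == u, c kl.2 == v & kl.2 != kl.1]] (fun kl => f kl.1 kl.2) =
  (csize c u * (csize c v - (u == v)))%:R^-1 *
    \sum_(k | c k == u) \sum_(l | (c l == v) && (l != k)) f k l.
Proof.
rewrite /mean card_class_pairs pair_big_dep; congr (_ * _).
by apply: eq_bigl => kl; rewrite inE.
Qed.

End ClassCounting.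

Section ConvexityOfFeasibleSet.
Variables (R : realFieldType) (n p q : nat) (I : finType) (A : {pred I}).
Hypothesis A_gt0 : (0 < #|A|)%N.

Definition meanF (FF : I -> Fvar R n q) : Fvar R n q :=
  fun i t => mean A (fun s => FF s i t).
Definition meanG (GG : I -> Gvar R n p) : Gvar R n p :=
  fun i a j b => mean A (fun s => GG s i a j b).

Lemma aeval_mean (e : aform R n p q) FF GG :
  aeval e (meanF FF) (meanG GG) = mean A (fun s => aeval e (FF s) (GG s)).
Proof.
rewrite /aeval !meanD mean_cst //; congr (_ + _ + _).
  by under eq_bigr => i _ do rewrite sum_mul_mean; rewrite mean_sum.
under eq_bigr => i _ do under eq_bigr => a _ do under eq_bigr => j _ do
  rewrite sum_mul_mean.
under eq_bigr => i _ do under eq_bigr => a _ do rewrite -mean_sum.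
by under eq_bigr => i _ do rewrite -mean_sum; rewrite -mean_sum.
Qed.

Definition quad_aform (x : 'I_n -> 'I_p -> R) : aform R n p q :=
  AForm 0 (fun _ _ => 0) (fun i a j b => x i a * x j b).

Lemma aeval_quad_aform x F G :
  aeval (quad_aform x) F G = \sum_i \sum_a \sum_j \sum_b x i a * G i a j b * x j b.
Proof.
rewrite /aeval /= add0r big1 ?add0r => [|i _]; last first.
  by rewrite big1 // => t _; rewrite mul0r.
by do 4!(apply: eq_bigr => ? _); rewrite mulrAC.
Qed.

Lemma psdG_mean GG : {in A, forall s, psdG (GG s)} -> psdG (meanG GG).
Proof.
move=> GG_psd; split=> [i a j b | x].
  by apply: eq_mean => s /GG_psd[GG_sym _]; rewrite GG_sym.
(* The quadratic form of G is itself an affine function of (F, G). *)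
rewrite -(aeval_quad_aform x (meanF (fun _ _ _ => 0))) aeval_mean.
by apply: mean_ge0 => s /GG_psd[_ GG_ge0]; rewrite aeval_quad_aform.
Qed.

Lemma psdmx_mean m (M : I -> 'M[R]_m) :
  {in A, forall s, psdmx (M s)} -> psdmx (\matrix_(r, t) mean A (fun s => M s r t)).
Proof.
move=> M_psd; have -> : \matrix_(r, t) mean A (fun s => M s r t) =
    #|A|%:R^-1 *: \sum_(s in A) M s.
  by apply/matrixP => r t; rewrite !mxE summxE.
split=> [|x].
  by rewrite linearZ linear_sum /=; congr (_ *: _); apply: eq_bigr => s /M_psd[].
rewrite -scalemxAr -scalemxAl mxE mulmx_sumr mulmx_suml summxE.
by rewrite mulr_ge0 ?invr_ge0 ?ler0n // sumr_ge0 // => s /M_psd[].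
Qed.

Lemma feasible_mean (P : pep R n p q) FF GG :
  {in A, forall s, feasible P (FF s) (GG s)} -> feasible P (meanF FF) (meanG GG).
Proof.
move=> feas; split; last split; last split.
- by apply: psdG_mean => s /feas[].
- move=> k; rewrite aeval_mean (eq_mean (y := fun _ => 0)) ?mean_cst //.
  by move=> s /feas[_ [/(_ k)]].
- by move=> k; rewrite aeval_mean; apply: mean_ge0 => s /feas[_ [_ [/(_ k)]]].
move=> l; set M := fun s => \matrix_(r, t) aeval (lmic _ _ _ _ P l r t) (FF s) (GG s).
have -> : \matrix_(r, t) aeval (lmic _ _ _ _ P l r t) (meanF FF) (meanG GG) =
    \matrix_(r, t) mean A (fun s => M s r t).
  by apply/matrixP => r t; rewrite !mxE aeval_mean; apply: eq_mean => s _; rewrite mxE.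
by apply: psdmx_mean => s /feas[_ [_ [_ /(_ l)]]].
Qed.

Lemma objective_mean (P : pep R n p q) FF GG :
  objective P (meanF FF) (meanG GG) = mean A (fun s => objective P (FF s) (GG s)).
Proof. exact: aeval_mean. Qed.

End ConvexityOfFeasibleSet.

Section Relabelling.
Variables (R : realFieldType) (n p q : nat).
Implicit Types (P : pep R n p q) (F : Fvar R n q) (G : Gvar R n p) (s t : {perm 'I_n}).

Definition permF s F : Fvar R n q := fun k r => F (s k) r.
Definition permG s G : Gvar R n p := fun k a l b => G (s k) a (s l) b.

Definition pep_invariant P s := forall F G, feasible P F G ->
  feasible P (permF s F) (permG s G) /\ objective P (permF s F) (permG s G) = objective P F G.

Lemma permF1 F : permF 1%g F = F.
Proof. by do 2!apply: functional_extensionality => ?; rewrite /permF perm1. Qed.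

Lemma permG1 G : permG 1%g G = G.
Proof. by do 4!apply: functional_extensionality => ?; rewrite /permG !perm1. Qed.

Lemma permFM s t F : permF (s * t)%g F = permF s (permF t F).
Proof. by do 2!apply: functional_extensionality => ?; rewrite /permF permM. Qed.

Lemma permGM s t G : permG (s * t)%g G = permG s (permG t G).
Proof. by do 4!apply: functional_extensionality => ?; rewrite /permG !permM. Qed.

Lemma pep_invariant1 P : pep_invariant P 1%g.
Proof. by move=> F G feas; rewrite permF1 permG1. Qed.

Lemma pep_invariantM P s t :
  pep_invariant P s -> pep_invariant P t -> pep_invariant P (s * t)%g.
Proof.
move=> inv_s inv_t F G /inv_t[/inv_s[feas obj_s] obj_t].
by rewrite permFM permGM obj_s obj_t.
Qed.

Lemma pep_invariant_class_perm P U (c : 'I_n -> 'I_U) :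
    (forall i j, c i = c j -> agents_equiv P i j) ->
  {in class_perm c, forall s, pep_invariant P s}.
Proof.
move=> equiv; apply: class_perm_ind; first exact: pep_invariant1.
by move=> s x y cxy inv_s; apply: pep_invariantM => //; apply: equiv.
Qed.

End Relabelling.

Section Symmetrization.
Variables (R : realFieldType) (n p q U : nat) (c : 'I_n -> 'I_U).

Lemma symF_mean (F : Fvar R n q) :
  symF c F = meanF (class_perm c) (fun s => permF s F).
Proof.
do 2!apply: functional_extensionality => ?.
by rewrite /meanF /permF (mean_orbit 'P _ _ (fun k => F k _)) orbit_class_perm mean_class.
Qed.

Lemma symG_mean (G : Gvar R n p) :
  symG c G = meanG (class_perm c) (fun s => permG s G).
Proof.
apply: functional_extensionality => i; apply: functional_extensionality => a.
apply: functional_extensionality => j; apply: functional_extensionality => b.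
rewrite /symG /meanG /permG; have [<- | nij] := eqVneq i j.
  by rewrite (mean_orbit 'P _ i (fun k => G k a k b)) orbit_class_perm mean_class.
rewrite (mean_orbit (pair_perm_action _) _ (i, j) (fun kl => G kl.1 a kl.2 b)).
rewrite orbit_pair_class_perm // (mean_class_pairs _ _ _ (fun k l => G k a l b)).
have [-> | ncji] := eqVneq (c j) (c i); first by rewrite subn1.
rewrite subn0; congr (_ * _).
apply: eq_bigr => k /eqP cki; apply: eq_bigl => l.
by have [-> | _] := eqVneq l k; rewrite ?andbT // andbF cki eq_sym (negbTE ncji).
Qed.

End Symmetrization.

Theorem proposition4 (R : realFieldType) (n p q : nat) (P : pep R n p q)
  (U : nat) (c : 'I_n -> 'I_U)
  (hc : forall i j : 'I_n, c i = c j <-> agents_equiv P i j)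
  (F : Fvar R n q) (G : Gvar R n p)
  (hF : feasible P F G) :
  feasible P (symF c F) (symG c G) /\
  objective P (symF c F) (symG c G) = objective P F G.
Proof.
have inv := pep_invariant_class_perm (fun i j => (hc i j).1).
have H_gt0 : (0 < #|class_perm c|)%N by apply/card_gt0P; exists 1%g; apply: group1.
rewrite symF_mean symG_mean; split.
  by apply: (feasible_mean H_gt0) => s /inv/(_ F G hF)[].
rewrite objective_mean // (eq_mean (y := fun _ => objective P F G)) ?mean_cst //.
by move=> s /inv/(_ F G hF)[].
Qed.
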